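(* Let $n\geq1$ be an integer, $p>1$ real, $q=pe^{2\pi i/n}$, and $X_{n,p}=\{\sum_{k=0}^{n-1}x_kq^k\mid x_k\in\{0,1\}\}$. For $h=1,\dots,n$ define $$\underline K(h)=\{k\in\{0,\dots,n-1\}\mid (k-h+1)\bmod n\leq \lfloor n/2\rfloor-1\},\qquad \overline K(h)=\{k\in\{0,\dots,n-1\}\mid (k-h+1)\bmod n\leq \lceil n/2\rceil-1\},$$ with $(k-h+1)\bmod n\in\{0,\dots,n-1\}$, and set $\mathbf v_{2h-1}=\sum_{k\in\underline K(h)}q^k$, $\mathbf v_{2h}=\sum_{k\in\overline K(h)}q^k$. Indices of the $\mathbf v_j$ are taken modulo $2n$ (so $\mathbf v_0=\mathbf v_{2n}$), and for $j=1,\dots,2n$ let $\mathbf n_j=-i(\mathbf v_j-\mathbf v_{j-1})$. Then for every $x\in X_{n,p}$ and every $h=1,\dots,n$, $$(x-\mathbf v_{2h-1})\cdot\mathbf n_{2h-1}\leq0\qquad\text{and}\qquad (x-\mathbf v_{2h})\cdot\mathbf n_{2h}\leq 0 .$$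
   Context: For $\mathbf u,\mathbf w\in\mathbb C$, the scalar product is $\mathbf u\cdot\mathbf w=\mathrm{Re}(\mathbf u\,\overline{\mathbf w})=|\mathbf u||\mathbf w|\cos(\arg\mathbf u-\arg\mathbf w)$, i.e. the Euclidean inner product under $\mathbb C\cong\mathbb R^2$. *)

From Stdlib Require Import Reals Lra Lia ZArith List.
From Coquelicot Require Import Coquelicot.
Open Scope R_scope.

Definition cdot (u w : C) : R := Re (Cmult u (Cconj w)).

Definition csum (l : list nat) (f : nat -> C) : C :=
  fold_right (fun k acc => Cplus (f k) acc) (RtoC 0) l.

Definition qn (n : nat) (p : R) : C :=
  Cmult (RtoC p) (cos (2 * PI / INR n), sin (2 * PI / INR n)).

Definition inX (n : nat) (p : R) (x : C) : Prop :=
  exists b : nat -> bool,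
    x = csum (seq 0 n) (fun k => if b k then Cpow (qn n p) k else RtoC 0).

Definition inKunder (n h k : nat) : bool :=
  Z.leb (Z.modulo (Z.of_nat k - Z.of_nat h + 1)%Z (Z.of_nat n))
        (Z.of_nat (n / 2) - 1)%Z.
Definition inKover (n h k : nat) : bool :=
  Z.leb (Z.modulo (Z.of_nat k - Z.of_nat h + 1)%Z (Z.of_nat n))
        (Z.of_nat ((n + 1) / 2) - 1)%Z.

Definition vunder (n : nat) (p : R) (h : nat) : C :=
  csum (filter (inKunder n h) (seq 0 n)) (fun k => Cpow (qn n p) k).
Definition vover (n : nat) (p : R) (h : nat) : C :=
  csum (filter (inKover n h) (seq 0 n)) (fun k => Cpow (qn n p) k).

(* v_j, index j taken modulo 2n with representative in {1,...,2n};
   v_{2h-1} = vunder h, v_{2h} = vover h. *)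
Definition vv (n : nat) (p : R) (j : Z) : C :=
  let r := Z.modulo j (2 * Z.of_nat n)%Z in
  let j' := if Z.eqb r 0 then (2 * Z.of_nat n)%Z else r in
  if Z.odd j' then vunder n p (Z.to_nat ((j' + 1) / 2)%Z)
  else vover n p (Z.to_nat (j' / 2)%Z).

Definition nn (n : nat) (p : R) (j : Z) : C :=
  Cmult (Copp Ci) (Cminus (vv n p j) (vv n p (j - 1)%Z)).

From Stdlib Require Import Reals ZArith List Lia Lra.
From Coquelicot Require Import Coquelicot.
Open Scope R_scope.

(* Write [x = sum_l b_l q^l] and [v_j = sum_(k in s) q^k], [v_(j-1) = sum_(k in s') q^k]
   with [s], [s'] cyclic windows of residues.  Then [(x - v_j) . n_j] is the double sum
   of [(b_l - [l in s]) ([k in s] - [k in s']) p^(k+l) sin((k - l) 2pi/n)].  Only the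
   (at most one) index [k] where the two windows differ contributes, and for it the
   sign of [sin((k - l) 2pi/n)] is determined by whether [l] lies in [s]: since [s] is a
   window of length about [n/2] ending at [k] or starting right after [k], the residues
   of [k - l] split into [[0, n/2]] and [[n/2, n)] accordingly.  Finally [b_l - [l in s]]
   is [<= 0] on [s] and [>= 0] off [s], so every term is [<= 0]. *)

Lemma cdot_eq u w : cdot u w = fst u * fst w + snd u * snd w.
Proof. destruct u, w; unfold cdot, Re, Cconj, Cmult; simpl; ring. Qed.

Lemma cdot_plus_l u v w : cdot (Cplus u v) w = cdot u w + cdot v w.
Proof. rewrite !cdot_eq; simpl; ring. Qed.

Lemma cdot_plus_r u v w : cdot u (Cplus v w) = cdot u v + cdot u w.
Proof. rewrite !cdot_eq; simpl; ring. Qed.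

Lemma cdot_csum_l_nonpos L f w :
  (forall l, In l L -> cdot (f l) w <= 0) -> cdot (csum L f) w <= 0.
Proof.
  induction L as [|a L IH]; simpl; intros Hf.
  - rewrite cdot_eq; simpl; lra.
  - rewrite cdot_plus_l.
    assert (cdot (f a) w <= 0) by auto.
    assert (cdot (csum L f) w <= 0) by auto.
    lra.
Qed.

Lemma cdot_csum_r_nonpos K u g :
  (forall k, In k K -> cdot u (g k) <= 0) -> cdot u (csum K g) <= 0.
Proof.
  induction K as [|a K IH]; simpl; intros Hg.
  - rewrite cdot_eq; simpl; lra.
  - rewrite cdot_plus_r.
    assert (cdot u (g a) <= 0) by auto.
    assert (cdot u (csum K g) <= 0) by auto.
    lra.
Qed.

Lemma cdot_csum_nonpos L K f g :
  (forall l k, In l L -> In k K -> cdot (f l) (g k) <= 0) ->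
  cdot (csum L f) (csum K g) <= 0.
Proof.
  intros H; apply cdot_csum_l_nonpos; intros l Hl.
  apply cdot_csum_r_nonpos; auto.
Qed.

Lemma csum_minus L f g :
  Cminus (csum L f) (csum L g) = csum L (fun k => Cminus (f k) (g k)).
Proof.
  induction L as [|a L IH]; simpl; [|rewrite <- IH];
    apply injective_projections; simpl; ring.
Qed.

Lemma csum_mult_l L f c : Cmult c (csum L f) = csum L (fun k => Cmult c (f k)).
Proof.
  induction L as [|a L IH]; simpl; [|rewrite <- IH];
    apply injective_projections; simpl; ring.
Qed.

Lemma csum_ext L f g : (forall k, f k = g k) -> csum L f = csum L g.
Proof. intros H; induction L as [|a L IH]; simpl; rewrite ?H, ?IH; auto. Qed.

Lemma csum_filter L s f :
  csum (filter s L) f = csum L (fun k => if s k then f k else RtoC 0).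
Proof.
  induction L as [|a L IH]; simpl; auto.
  destruct (s a); simpl; rewrite IH; auto.
  apply injective_projections; simpl; ring.
Qed.

Definition alpha (n : nat) : R := 2 * PI / INR n.

Lemma Cpow_qn n p k :
  Cpow (qn n p) k = (p ^ k * cos (INR k * alpha n), p ^ k * sin (INR k * alpha n)).
Proof.
  induction k as [|k IH].
  - simpl; rewrite Rmult_0_l, cos_0, sin_0.
    apply injective_projections; simpl; ring.
  - change (Cpow (qn n p) (S k)) with (Cmult (qn n p) (Cpow (qn n p) k)).
    rewrite IH, S_INR.
    replace ((INR k + 1) * alpha n) with (alpha n + INR k * alpha n) by ring.
    rewrite cos_plus, sin_plus; unfold qn, alpha.
    apply injective_projections; simpl; ring.
Qed.

Lemma cdot_Cpow_qn_rot n p l k :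
  cdot (Cpow (qn n p) l) (Cmult (Copp Ci) (Cpow (qn n p) k)) =
  p ^ l * p ^ k * sin ((INR k - INR l) * alpha n).
Proof.
  rewrite !Cpow_qn, cdot_eq, Rmult_minus_distr_r, sin_minus; simpl; ring.
Qed.

Definition ind (b : bool) : R := if b then 1 else 0.

Lemma Cminus_if (b s : bool) (z : C) :
  Cminus (if b then z else RtoC 0) (if s then z else RtoC 0) = Cmult (RtoC (ind b - ind s)) z.
Proof. destruct b, s; apply injective_projections; simpl; ring. Qed.

Lemma cdot_scal_rot (beta gamma : R) u w :
  cdot (Cmult (RtoC beta) u) (Cmult (Copp Ci) (Cmult (RtoC gamma) w)) =
  beta * gamma * cdot u (Cmult (Copp Ci) w).
Proof. rewrite !cdot_eq; simpl; ring. Qed.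

Definition qsum (n : nat) (p : R) (s : nat -> bool) : C :=
  csum (seq 0 n) (fun k => if s k then Cpow (qn n p) k else RtoC 0).

Lemma qsum_ext n p s s' : (forall k, s k = s' k) -> qsum n p s = qsum n p s'.
Proof. intros H; apply csum_ext; intros k; rewrite H; auto. Qed.

(* [sin((k - l) alpha) >= 0] says that [q^l] lies clockwise of [q^k] (within a half-turn). *)
Definition splits (n : nat) (s : nat -> bool) (k : nat) : Prop :=
  forall l, (s l = s k -> 0 <= sin ((INR k - INR l) * alpha n)) /\
            (s l <> s k -> sin ((INR k - INR l) * alpha n) <= 0).

Definition separating (n : nat) (s s' : nat -> bool) : Prop :=
  forall k, s k <> s' k -> splits n s k.

Lemma qsum_halfplane n p b s s' :
  0 < p -> separating n s s' ->
  cdot (Cminus (qsum n p b) (qsum n p s))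
       (Cmult (Copp Ci) (Cminus (qsum n p s) (qsum n p s'))) <= 0.
Proof.
  intros Hp Hsep; unfold qsum.
  rewrite !csum_minus, csum_mult_l.
  apply cdot_csum_nonpos; intros l k _ _; cbv beta.
  rewrite !Cminus_if, cdot_scal_rot, cdot_Cpow_qn_rot.
  assert (HP : 0 < p ^ l * p ^ k) by (apply Rmult_lt_0_compat; apply pow_lt; lra).
  set (S := sin ((INR k - INR l) * alpha n)).
  destruct (Bool.bool_dec (s k) (s' k)) as [E|D].
  - rewrite E; nra.
  - destruct (Hsep k D l) as [Hsame Hdiff]; fold S in Hsame, Hdiff.
    destruct (s k), (s' k); try congruence;
      destruct (s l), (b l); unfold ind;
      try specialize (Hsame eq_refl); try specialize (Hdiff ltac:(discriminate));
      nra.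
Qed.

Lemma sin_Zperiod x t : sin (x + IZR t * (2 * PI)) = sin x.
Proof.
  destruct t as [|q|q].
  - rewrite Rmult_0_l, Rplus_0_r; reflexivity.
  - rewrite <- positive_nat_Z, <- INR_IZR_INZ.
    replace (INR (Pos.to_nat q) * (2 * PI)) with (2 * INR (Pos.to_nat q) * PI) by ring.
    apply sin_period.
  - replace (IZR (Z.neg q)) with (- INR (Pos.to_nat q))
      by (rewrite INR_IZR_INZ, positive_nat_Z, <- opp_IZR; reflexivity).
    set (y := x + - INR (Pos.to_nat q) * (2 * PI)).
    assert (Hx : x = y + 2 * INR (Pos.to_nat q) * PI) by (unfold y; ring).
    rewrite Hx at 1; symmetry; apply sin_period.
Qed.

Lemma sin_mod_alpha n z :
  (1 <= n)%nat -> sin (IZR z * alpha n) = sin (IZR (z mod Z.of_nat n) * alpha n).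
Proof.
  intros Hn.
  assert (HnR : INR n <> 0) by (apply not_0_INR; lia).
  rewrite (Z.div_mod z (Z.of_nat n)) at 1 by lia.
  rewrite plus_IZR, mult_IZR, <- INR_IZR_INZ.
  replace ((INR n * IZR (z / Z.of_nat n) + IZR (z mod Z.of_nat n)) * alpha n)
    with (IZR (z mod Z.of_nat n) * alpha n + IZR (z / Z.of_nat n) * (2 * PI))
    by (unfold alpha; field; auto).
  apply sin_Zperiod.
Qed.

Lemma sin_alpha_nonneg n m :
  (1 <= n)%nat -> (0 <= m)%Z -> (2 * m <= Z.of_nat n)%Z -> 0 <= sin (IZR m * alpha n).
Proof.
  intros Hn Hm0 Hm.
  assert (HnR : 0 < INR n) by (apply lt_0_INR; lia).
  assert (0 <= IZR m) by (apply IZR_le; lia).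
  assert (2 * IZR m <= INR n) by (rewrite INR_IZR_INZ, <- mult_IZR; apply IZR_le; lia).
  pose proof PI_RGT_0.
  apply sin_ge_0; unfold alpha.
  - apply Rmult_le_pos; [lra|]; apply Rdiv_le_0_compat; lra.
  - apply Rmult_le_reg_r with (INR n); auto.
    replace (IZR m * (2 * PI / INR n) * INR n) with (2 * IZR m * PI) by (field; lra).
    nra.
Qed.

Lemma sin_alpha_nonpos n m :
  (1 <= n)%nat -> (m <= Z.of_nat n <= 2 * m)%Z -> sin (IZR m * alpha n) <= 0.
Proof.
  intros Hn Hm.
  assert (HnR : 0 < INR n) by (apply lt_0_INR; lia).
  assert (INR n <= 2 * IZR m) by (rewrite INR_IZR_INZ, <- mult_IZR; apply IZR_le; lia).
  assert (IZR m <= INR n) by (rewrite INR_IZR_INZ; apply IZR_le; lia).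
  pose proof PI_RGT_0.
  assert (E : IZR m * alpha n * INR n = 2 * IZR m * PI) by (unfold alpha; field; lra).
  apply sin_le_0; apply Rmult_le_reg_r with (INR n); auto; rewrite E; nra.
Qed.

Definition res (n : nat) (c : Z) (k : nat) : Z := ((Z.of_nat k - c) mod Z.of_nat n)%Z.

Definition window (n : nat) (c m : Z) (k : nat) : bool := (res n c k <=? m - 1)%Z.

Lemma res_bound n c k : (1 <= n)%nat -> (0 <= res n c k < Z.of_nat n)%Z.
Proof. intros; apply Z.mod_pos_bound; lia. Qed.

Lemma res_pred n c k : (1 <= n)%nat -> res n (c - 1) k = ((res n c k + 1) mod Z.of_nat n)%Z.
Proof.
  intros Hn; unfold res; rewrite Z.add_mod_idemp_l by lia; f_equal; ring.
Qed.

Lemma res_add_period n c k : (1 <= n)%nat -> res n (c + Z.of_nat n) k = res n c k.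
Proof.
  intros Hn; unfold res.
  replace (Z.of_nat k - (c + Z.of_nat n))%Z with (Z.of_nat k - c + (-1) * Z.of_nat n)%Z
    by ring.
  apply Z.mod_add; lia.
Qed.

Lemma sin_res n c k l :
  (1 <= n)%nat ->
  sin ((INR k - INR l) * alpha n) =
  sin (IZR ((res n c k - res n c l) mod Z.of_nat n) * alpha n).
Proof.
  intros Hn; unfold res; rewrite <- Zminus_mod, <- sin_mod_alpha by auto.
  rewrite !INR_IZR_INZ, <- minus_IZR; do 3 f_equal; ring.
Qed.

Lemma Zmod_sub_cases a b N :
  (0 <= a < N)%Z -> (0 <= b < N)%Z ->
  ((a - b) mod N = a - b /\ b <= a \/ (a - b) mod N = a - b + N /\ a < b)%Z.
Proof.
  intros Ha Hb; destruct (Z_le_gt_dec b a).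
  - left; split; [apply Z.mod_small|]; lia.
  - right; split; [|lia].
    rewrite <- (Z.mod_add (a - b) 1 N), Z.mul_1_l by lia.
    apply Z.mod_small; lia.
Qed.

Lemma window_splits_last n c m k :
  (1 <= n)%nat -> (Z.of_nat n <= 2 * m <= Z.of_nat n + 2)%Z -> res n c k = (m - 1)%Z ->
  splits n (window n c m) k.
Proof.
  intros Hn Hm Hk l; unfold window; rewrite (sin_res n c k l Hn), Hk, Z.leb_refl.
  pose proof (res_bound n c l Hn).
  destruct (Zmod_sub_cases (m - 1) (res n c l) (Z.of_nat n)) as [[-> ?]|[-> ?]];
    try lia; destruct (Z.leb_spec (res n c l) (m - 1)); split; intros; try congruence;
    first [ apply sin_alpha_nonneg | apply sin_alpha_nonpos ]; lia.
Qed.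

Lemma window_splits_before n c m k :
  (1 <= n)%nat -> (2 * m <= Z.of_nat n <= 2 * m + 2)%Z -> res n c k = (Z.of_nat n - 1)%Z ->
  splits n (window n c m) k.
Proof.
  intros Hn Hm Hk l; unfold window; rewrite (sin_res n c k l Hn), Hk.
  pose proof (res_bound n c l Hn).
  replace (Z.of_nat n - 1 <=? m - 1)%Z with false by (symmetry; apply Z.leb_gt; lia).
  destruct (Zmod_sub_cases (Z.of_nat n - 1) (res n c l) (Z.of_nat n)) as [[-> ?]|[-> ?]];
    try lia; destruct (Z.leb_spec (res n c l) (m - 1)); split; intros; try congruence;
    first [ apply sin_alpha_nonneg | apply sin_alpha_nonpos ]; lia.
Qed.

Lemma window_separating_grow n c m :
  (1 <= n)%nat -> (2 * m <= Z.of_nat n <= 2 * m + 1)%Z ->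
  separating n (window n c (Z.of_nat n - m)) (window n c m).
Proof.
  intros Hn Hm k Hne; apply window_splits_last; [auto|lia|].
  unfold window in Hne.
  destruct (Z.leb_spec (res n c k) (Z.of_nat n - m - 1));
    destruct (Z.leb_spec (res n c k) (m - 1)); try congruence; lia.
Qed.

Lemma window_separating_shift n c m :
  (1 <= n)%nat -> (2 * m <= Z.of_nat n <= 2 * m + 1)%Z ->
  separating n (window n c m) (window n (c - 1) (Z.of_nat n - m)).
Proof.
  intros Hn Hm k Hne; unfold window in Hne; rewrite res_pred in Hne by auto.
  pose proof (res_bound n c k Hn).
  destruct (Z.eq_dec (res n c k) (Z.of_nat n - 1)) as [E|E].
  - apply window_splits_before; [auto|lia|auto].
  - rewrite Z.mod_small in Hne by lia.
    apply window_splits_last; [auto| |];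
      destruct (Z.leb_spec (res n c k) (m - 1));
      destruct (Z.leb_spec (res n c k + 1) (Z.of_nat n - m - 1)); try congruence; lia.
Qed.

Lemma half_bounds n : (2 * Z.of_nat (n / 2) <= Z.of_nat n <= 2 * Z.of_nat (n / 2) + 1)%Z.
Proof.
  pose proof (Nat.div_mod n 2 ltac:(lia)); pose proof (Nat.mod_upper_bound n 2 ltac:(lia)).
  lia.
Qed.

Lemma inKunder_window n h k :
  inKunder n h k = window n (Z.of_nat h - 1) (Z.of_nat (n / 2)) k.
Proof.
  unfold inKunder, window, res.
  replace (Z.of_nat k - Z.of_nat h + 1)%Z with (Z.of_nat k - (Z.of_nat h - 1))%Z by ring.
  reflexivity.
Qed.

Lemma inKover_window n h k :
  inKover n h k = window n (Z.of_nat h - 1) (Z.of_nat n - Z.of_nat (n / 2)) k.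
Proof.
  unfold inKover, window, res.
  replace (Z.of_nat k - Z.of_nat h + 1)%Z with (Z.of_nat k - (Z.of_nat h - 1))%Z by ring.
  replace (Z.of_nat ((n + 1) / 2)) with (Z.of_nat n - Z.of_nat (n / 2))%Z.
  - reflexivity.
  - pose proof (Nat.div_mod n 2 ltac:(lia)); pose proof (Nat.mod_upper_bound n 2 ltac:(lia)).
    pose proof (Nat.div_mod (n + 1) 2 ltac:(lia)).
    pose proof (Nat.mod_upper_bound (n + 1) 2 ltac:(lia)).
    lia.
Qed.

Lemma vunder_qsum n p h : vunder n p h = qsum n p (inKunder n h).
Proof. apply csum_filter. Qed.

Lemma vover_qsum n p h : vover n p h = qsum n p (inKover n h).
Proof. apply csum_filter. Qed.

Lemma vv_odd n p h : (1 <= h <= n)%nat ->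
  vv n p (2 * Z.of_nat h - 1)%Z = qsum n p (window n (Z.of_nat h - 1) (Z.of_nat (n / 2))).
Proof.
  intros Hh; unfold vv.
  rewrite Z.mod_small by lia.
  destruct (Z.eqb_spec (2 * Z.of_nat h - 1) 0); [lia|].
  replace (2 * Z.of_nat h - 1)%Z with (2 * (Z.of_nat h - 1) + 1)%Z by ring.
  rewrite Z.odd_odd.
  replace (2 * (Z.of_nat h - 1) + 1 + 1)%Z with (Z.of_nat h * 2)%Z by ring.
  rewrite Z.div_mul, Nat2Z.id, vunder_qsum by lia; apply qsum_ext, inKunder_window.
Qed.

Lemma vv_even n p h : (1 <= h <= n)%nat ->
  vv n p (2 * Z.of_nat h)%Z =
  qsum n p (window n (Z.of_nat h - 1) (Z.of_nat n - Z.of_nat (n / 2))).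
Proof.
  intros Hh; unfold vv.
  replace (if ((2 * Z.of_nat h) mod (2 * Z.of_nat n) =? 0)%Z then (2 * Z.of_nat n)%Z
           else ((2 * Z.of_nat h) mod (2 * Z.of_nat n))%Z) with (2 * Z.of_nat h)%Z.
  2:{ destruct (Nat.eq_dec h n) as [->|].
      - rewrite Z.mod_same by lia; reflexivity.
      - rewrite Z.mod_small by lia; destruct (Z.eqb_spec (2 * Z.of_nat h) 0); lia. }
  rewrite Z.odd_even, Z.mul_comm, Z.div_mul, Nat2Z.id, vover_qsum by lia.
  apply qsum_ext, inKover_window.
Qed.

Lemma vv_even_pred n p h : (1 <= h <= n)%nat ->
  vv n p (2 * Z.of_nat h - 1 - 1)%Z =
  qsum n p (window n (Z.of_nat h - 1 - 1) (Z.of_nat n - Z.of_nat (n / 2))).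
Proof.
  intros Hh; destruct (Nat.eq_dec h 1) as [->|].
  - (* [v_0] is [v_(2n)], whose window starts at [n - 1], i.e. at [-1] mod [n]. *)
    replace (vv n p (2 * Z.of_nat 1 - 1 - 1)) with (vv n p (2 * Z.of_nat n))
      by (unfold vv; rewrite Z.mod_same by lia; reflexivity).
    rewrite vv_even by lia; apply qsum_ext; intros k; unfold window.
    rewrite <- (res_add_period n (Z.of_nat 1 - 1 - 1)) by lia.
    replace (Z.of_nat 1 - 1 - 1 + Z.of_nat n)%Z with (Z.of_nat n - 1)%Z by lia.
    reflexivity.
  - replace (2 * Z.of_nat h - 1 - 1)%Z with (2 * Z.of_nat (h - 1))%Z by lia.
    rewrite vv_even by lia.
    replace (Z.of_nat (h - 1) - 1)%Z with (Z.of_nat h - 1 - 1)%Z by lia.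
    reflexivity.
Qed.

Theorem lemma3p13 (n : nat) (p : R) :
  (1 <= n)%nat -> 1 < p ->
  forall x : C, inX n p x ->
  forall h : nat, (1 <= h <= n)%nat ->
    cdot (Cminus x (vv n p (2 * Z.of_nat h - 1)%Z)) (nn n p (2 * Z.of_nat h - 1)%Z) <= 0 /\
    cdot (Cminus x (vv n p (2 * Z.of_nat h)%Z)) (nn n p (2 * Z.of_nat h)%Z) <= 0.
Proof.
  intros Hn Hp x [b Hx] h Hh.
  replace x with (qsum n p b) by (rewrite Hx; reflexivity).
  pose proof (half_bounds n) as Hhalf.
  unfold nn; split.
  - rewrite vv_odd, vv_even_pred by auto.
    apply qsum_halfplane; [lra|].
    apply window_separating_shift; auto.
  - rewrite vv_even, vv_odd by auto.
    apply qsum_halfplane; [lra|].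
    apply window_separating_grow; auto.
Qed.
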